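(* (ZFC.) Let $F$ be any set of functions on $[0,1]$, each of arity $\alpha$ with $0<\alpha\le\omega$ (i.e. with finitely or countably many arguments), such that $|F|\le\mathfrak{c}$. Then $\mathsf{Agg}$ is not generated by $F$ as a $\sigma$-clone: not every aggregation function of finite arity belongs to the $\sigma$-clone generated by $F$.
   Context: $\mathfrak{c}=2^{\aleph_0}$; the axiom of choice is assumed. $\omega$ is the first infinite ordinal. An $n$-ary aggregation function on $[0,1]$ is a function $f\colon[0,1]^n\to[0,1]$ nondecreasing in each coordinate with $f(0,\dots,0)=0$, $f(1,\dots,1)=1$; $\mathsf{Agg}$ is the set of all aggregation functions of all finite arities. For an $\alpha$-ary $f$ and $\beta$-ary functions $g_i$, $i<\alpha$ ($0<\alpha,\beta\le\omega$), the composition $f\circ(g_i:i<\alpha)$ is $\mathbf{x}\mapsto f((g_i(\mathbf{x}))_{i<\alpha})$. A $\sigma$-clone is a set of functions on $[0,1]$ of arities $0<\alpha\le\omega$ containing all projections and closed under such compositions; the $\sigma$-clone generated by $F$ is the smallest one containing $F$. *)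

From Stdlib Require Import Reals.
From mathcomp Require Import all_boot.

Set Implicit Arguments.
Unset Strict Implicit.
Unset Printing Implicit Defensive.

Definition I01 : Type := {x : R | Rle 0 x /\ Rle x 1}.

Inductive arity : Type := ar_fin (n : nat) | ar_omega.

Definition valid_ar (a : arity) : Prop :=
  match a with ar_fin n => (0 < n)%N | ar_omega => True end.

Definition dom (a : arity) : Type :=
  match a with ar_fin n => 'I_n | ar_omega => nat end.

Definition op (a : arity) : Type := (dom a -> I01) -> I01.

Definition func : Type := {a : arity & op a}.

Definition mkfunc (a : arity) (f : op a) : func := existT op a f.

Definition proj (a : arity) (i : dom a) : op a := fun x => x i.

Definition compose (a b : arity) (f : op a) (g : dom a -> op b) : op b :=
  fun x => f (fun i => g i x).

Definition is_sigma_clone (C : func -> Prop) : Prop :=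
  (forall h : func, C h -> valid_ar (projT1 h)) /\
  (forall (a : arity) (i : dom a), valid_ar a -> C (mkfunc (proj i))) /\
  (forall (a b : arity) (f : op a) (g : dom a -> op b),
      valid_ar a -> valid_ar b ->
      C (mkfunc f) -> (forall i, C (mkfunc (g i))) ->
      C (mkfunc (compose f g))).

Definition in_sigma_clone_gen (F : func -> Prop) (h : func) : Prop :=
  forall C : func -> Prop, is_sigma_clone C ->
    (forall k, F k -> C k) -> C h.

Definition is_aggregation (n : nat) (f : op (ar_fin n)) : Prop :=
  (forall x y : 'I_n -> I01,
      (forall i, Rle (proj1_sig (x i)) (proj1_sig (y i))) ->
      Rle (proj1_sig (f x)) (proj1_sig (f y))) /\
  (forall x : 'I_n -> I01, (forall i, proj1_sig (x i) = R0) ->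
      proj1_sig (f x) = R0) /\
  (forall x : 'I_n -> I01, (forall i, proj1_sig (x i) = R1) ->
      proj1_sig (f x) = R1).

(* |F| <= continuum = 2^aleph_0 = |nat -> bool|. *)
Definition card_le_continuum (F : func -> Prop) : Prop :=
  exists e : {h : func | F h} -> (nat -> bool), injective e.

From Stdlib Require Import Reals Lra Eqdep_dec FunctionalExtensionality.
From Stdlib Require Import Classical ClassicalEpsilon.
From Coquelicot Require Import Coquelicot.
From mathcomp Require Import all_boot.

Set Implicit Arguments.
Unset Strict Implicit.
Unset Printing Implicit Defensive.

(** Cantor's diagonal argument. For A ⊆ [0,1] the binary function that is 0
below the antidiagonal u + v = 1, 1 above it and the indicator of A (in u) on
it is an aggregation function, and it determines A; so there are 2^c of them.
Every member of the σ-clone generated by F is the value of a term, a countably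
branching well-founded tree labelled by elements of F, arities and indices;
such a tree is determined by its labels along the countably many finite paths,
so terms are coded injectively by bit sequences and then by points of [0,1]
(ternary Cantor set). Diagonalising against these codes produces a set A whose
aggregation function is not the value of any term. *)

Section Cantor.

Variables (T X Y : Type) (code : T -> X) (g : (X -> Prop) -> Y) (den : T -> Y -> Prop).
Hypothesis code_inj : injective code.
Hypothesis den_functional : forall t y y', den t y -> den t y' -> y = y'.
Hypothesis g_on_codes : forall A B t, g A = g B -> A (code t) -> B (code t).

Lemma not_all_denoted : ~ (forall A, exists t, den t (g A)).
Proof.
move=> all_denoted.
pose D x := exists A t, code t = x /\ den t (g A) /\ ~ A x.
have [t0 t0D] := all_denoted D.
have notD : ~ D (code t0).
  move=> Dt0; have [A [t [/code_inj eq_t [t0A notA]]]] := Dt0.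
  rewrite {}eq_t in t0A.
  exact/notA/(g_on_codes (den_functional t0D t0A) Dt0).
by apply: (notD); exists D, t0.
Qed.

End Cantor.

Lemma arity_eq_dec (a b : arity) : {a = b} + {a <> b}.
Proof. decide equality; exact: PeanoNat.Nat.eq_dec. Qed.

Lemma mkfunc_inj (a : arity) (f g : op a) : mkfunc f = mkfunc g -> f = g.
Proof. exact: (inj_pair2_eq_dec _ arity_eq_dec). Qed.

Section Terms.

Variable F : func -> Prop.

Inductive term : Type :=
| Leaf (k : {h : func | F h})
| Prj (a : arity) (i : dom a)
| Cmp (a b : arity) (t : term) (ts : dom a -> term).

Fixpoint denotes (t : term) (h : func) : Prop :=
  match t with
  | Leaf k => h = proj1_sig k
  | Prj a i => valid_ar a /\ h = mkfunc (proj i)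
  | Cmp a b t0 ts => valid_ar a /\ valid_ar b /\
      exists (f : op a) (g : dom a -> op b),
        [/\ denotes t0 (mkfunc f), forall i, denotes (ts i) (mkfunc (g i))
          & h = mkfunc (compose f g)]
  end.

Lemma denotes_functional t h h' : denotes t h -> denotes t h' -> h = h'.
Proof.
elim: t h h' => [k|a i|a b t0 IH ts IHs] h h' /=.
- by move=> -> ->.
- by move=> [_ ->] [_ ->].
- move=> [_ [_ [f [g [t0f tsg ->]]]]] [_ [_ [f' [g' [t0f' tsg' ->]]]]].
  have -> : f = f' by apply/mkfunc_inj/(IH _ _ t0f t0f').
  have -> // : g = g'.
  by apply: functional_extensionality => i; apply/mkfunc_inj/(IHs _ _ _ (tsg i)).
Qed.

Definition term_clone (h : func) : Prop := exists t, denotes t h.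

Hypothesis F_valid : forall h, F h -> valid_ar (projT1 h).

Lemma term_clone_sigma_clone : is_sigma_clone term_clone.
Proof.
split; [|split].
- move=> h [[k|a i|a b t0 ts]] /=.
  + by move=> ->; apply/F_valid/(proj2_sig k).
  + by move=> [? ->].
  + by move=> [_ [? [f [g [_ _ ->]]]]].
- by move=> a i a_valid; exists (Prj i).
- move=> a b f g a_valid b_valid [t tf] gs_in.
  have [ts tsg] := choice (fun i t => denotes t (mkfunc (g i))) gs_in.
  by exists (Cmp b t ts); split=> //; split=> //; exists f, g.
Qed.

Lemma in_sigma_clone_gen_term h : in_sigma_clone_gen F h -> term_clone h.
Proof.
apply; first exact: term_clone_sigma_clone.
by move=> h' Fh'; exists (Leaf (exist _ h' Fh')).
Qed.

End Terms.

Definition bits_of_family (I : countType) (phi : I -> nat -> bool) : nat -> bool :=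
  fun n => if @unpickle (I * nat)%type n is Some (i, k) then phi i k else false.

Lemma bits_of_family_inj (I : countType) : injective (@bits_of_family I).
Proof.
move=> phi psi E; apply: functional_extensionality => i.
apply: functional_extensionality => k.
by have := congr1 (fun c => c (pickle (i, k))) E; rewrite /bits_of_family pickleK.
Qed.

Definition bits_pair (c d : nat -> bool) : nat -> bool :=
  bits_of_family (fun b : bool => if b then c else d).

Lemma bits_pair_inj c d c' d' : bits_pair c d = bits_pair c' d' -> c = c' /\ d = d'.
Proof.
move/bits_of_family_inj => E.
by split; [have := congr1 (fun phi => phi true) E | have := congr1 (fun phi => phi false) E].
Qed.

Definition bits_of_nat (m : nat) : nat -> bool := fun n => n == m.

Lemma bits_of_nat_inj : injective bits_of_nat.
Proof. by move=> m m' /(congr1 (fun c => c m)); rewrite /bits_of_nat eqxx => /esym/eqP. Qed.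

Definition nat_of_arity (a : arity) : nat :=
  match a with ar_fin n => n.+1 | ar_omega => 0 end.

Lemma nat_of_arity_inj : injective nat_of_arity.
Proof. by case=> [n|] [m|] //= [->]. Qed.

Definition nat_of_dom (a : arity) : dom a -> nat :=
  match a with ar_fin n => @nat_of_ord n | ar_omega => id end.

Definition dom_of_nat (a : arity) : nat -> option (dom a) :=
  match a with ar_fin n => insub | ar_omega => Some end.

Lemma nat_of_domK a : pcancel (@nat_of_dom a) (@dom_of_nat a).
Proof. case: a => [n|] i //=; exact: valK. Qed.

Section TermCode.

Variable F : func -> Prop.

Inductive label : Type :=
| LNone | LLeaf (k : {h : func | F h}) | LPrj (a : arity) (i : nat) | LCmp (a b : arity).

Fixpoint label_at (t : term F) (p : seq nat) : label :=
  match t, p with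
  | Leaf k, [::] => LLeaf k
  | Prj a i, [::] => LPrj a (nat_of_dom i)
  | Cmp a b _ _, [::] => LCmp a b
  | Cmp _ _ t0 _, 0 :: p' => label_at t0 p'
  | Cmp a _ _ ts, j.+1 :: p' =>
      if dom_of_nat a j is Some i then label_at (ts i) p' else LNone
  | _, _ => LNone
  end.

Lemma label_at_inj t t' : label_at t =1 label_at t' -> t = t'.
Proof.
elim: t t' => [k|a i|a b t0 IH ts IHs] [k'|a' i'|a' b' t0' ts'] E;
  have := E [::] => //= -[].
- by move=> ->.
- by move=> eq_a; subst a' => /(pcan_inj (@nat_of_domK a)) ->.
- move=> eq_a eq_b; subst a' b'.
  have -> : t0 = t0' by apply: IH => p; exact: E (0%N :: p).
  have -> // : ts = ts'.
  apply: functional_extensionality => i; apply: IHs => p.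
  by have := E ((nat_of_dom i).+1 :: p); rewrite /= nat_of_domK.
Qed.

Variable code : {h : func | F h} -> nat -> bool.
Hypothesis code_inj : injective code.

Definition label_bits (l : label) : nat -> bool :=
  match l with
  | LNone => bits_pair (bits_of_nat 0) (bits_of_nat 0)
  | LLeaf k => bits_pair (bits_of_nat 1) (code k)
  | LPrj a i => bits_pair (bits_of_nat 2)
                  (bits_pair (bits_of_nat (nat_of_arity a)) (bits_of_nat i))
  | LCmp a b => bits_pair (bits_of_nat 3)
                  (bits_pair (bits_of_nat (nat_of_arity a)) (bits_of_nat (nat_of_arity b)))
  end.

Lemma label_bits_inj : injective label_bits.
Proof.
move=> [|k|a i|a b] [|k'|a' i'|a' b'] /= /bits_pair_inj [/bits_of_nat_inj // _].
- by move/code_inj ->.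
- by case/bits_pair_inj => /bits_of_nat_inj/nat_of_arity_inj -> /bits_of_nat_inj ->.
- by case/bits_pair_inj => /bits_of_nat_inj/nat_of_arity_inj -> /bits_of_nat_inj/nat_of_arity_inj ->.
Qed.

Definition term_bits (t : term F) : nat -> bool :=
  bits_of_family (fun p : seq nat => label_bits (label_at t p)).

Lemma term_bits_inj : injective term_bits.
Proof.
move=> t t' /bits_of_family_inj E; apply: label_at_inj => p.
by apply: label_bits_inj; have := congr1 (fun phi => phi p) E.
Qed.

End TermCode.

Open Scope R_scope.

Definition ternary_digit (c : nat -> bool) (n : nat) : R :=
  if c n then 2/3 * (/3)^n else 0.

Definition cantor_point (c : nat -> bool) : R := Series (ternary_digit c).

Lemma ex_series_le_geom3 (a : nat -> R) :
  (forall n, 0 <= a n <= (/3)^n) -> ex_series a.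
Proof.
move=> a_bound; apply: (@ex_series_le _ _ _ (fun n => (/3)^n)).
  move=> n; rewrite /norm /= /abs /= Rabs_pos_eq; by case: (a_bound n).
by apply: ex_series_geom; rewrite Rabs_pos_eq; lra.
Qed.

Lemma ternary_digit_bound c n : 0 <= ternary_digit c n <= 2/3 * (/3)^n.
Proof.
have := pow_le (/3) n; rewrite /ternary_digit; case: (c n); lra.
Qed.

Lemma ex_series_ternary_digit c : ex_series (ternary_digit c).
Proof.
apply: ex_series_le_geom3 => n.
have := ternary_digit_bound c n; have := pow_le (/3) n; lra.
Qed.

Lemma cantor_point_in01 c : 0 <= cantor_point c <= 1.
Proof.
split.
  rewrite -(Rmult_0_l (Series (ternary_digit c))) -Series_scal_l.
  apply: Series_le; last exact: ex_series_ternary_digit.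
  move=> n; have := ternary_digit_bound c n; lra.
have -> : 1 = Series (fun n => 2/3 * (/3)^n).
  rewrite Series_scal_l Series_geom; first field.
  rewrite Rabs_pos_eq; lra.
apply: Series_le; first exact: ternary_digit_bound.
apply: ex_series_le_geom3 => n; have := pow_le (/3) n; lra.
Qed.

Lemma cantor_point_S c :
  cantor_point c = (if c O then 2/3 else 0) + /3 * cantor_point (fun k => c k.+1).
Proof.
rewrite /cantor_point Series_incr_1; last exact: ex_series_ternary_digit.
rewrite -Series_scal_l; congr (_ + _).
  by rewrite /ternary_digit /=; case: (c O); lra.
by apply: Series_ext => n; rewrite /ternary_digit /=; case: (c n.+1); lra.
Qed.

Lemma cantor_point_eqS c c' : cantor_point c = cantor_point c' ->
  c O = c' O /\ cantor_point (fun k => c k.+1) = cantor_point (fun k => c' k.+1).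
Proof.
rewrite (cantor_point_S c) (cantor_point_S c').
have := cantor_point_in01 (fun k => c k.+1).
have := cantor_point_in01 (fun k => c' k.+1).
by case: (c O); case: (c' O) => ? ? E; split=> //; lra.
Qed.

Lemma cantor_point_inj : injective cantor_point.
Proof.
move=> c c' E; apply: functional_extensionality => n.
elim: n c c' E => [|n IHn] c c' /cantor_point_eqS [E0 ES] //.
exact: IHn ES.
Qed.

Definition indicator (P : Prop) : R :=
  if excluded_middle_informative P then 1 else 0.

Lemma indicator_in01 P : 0 <= indicator P <= 1.
Proof. rewrite /indicator; by destruct (excluded_middle_informative P) => /=; lra. Qed.

Lemma indicator_eq1 P : indicator P = 1 -> P.
Proof. rewrite /indicator; by destruct (excluded_middle_informative P) => //=; lra. Qed.

Lemma indicator_1 P : P -> indicator P = 1.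
Proof. by rewrite /indicator; destruct (excluded_middle_informative P). Qed.

Definition threshold (A : R -> Prop) (u v : R) : R :=
  match total_order_T (u + v) 1 with
  | inleft (left _) => 0
  | inleft (right _) => indicator (A u)
  | inright _ => 1
  end.

Lemma threshold_in01 A u v : 0 <= threshold A u v <= 1.
Proof.
rewrite /threshold; case: total_order_T => [[_|_]|_]; try lra.
exact: indicator_in01.
Qed.

Lemma threshold_mono A u v u' v' :
  u <= u' -> v <= v' -> threshold A u v <= threshold A u' v'.
Proof.
move=> le_u le_v; rewrite /threshold.
have := indicator_in01 (A u); have := indicator_in01 (A u').
case: total_order_T => [[?|?]|?]; case: total_order_T => [[?|?]|?]; try lra.
have -> : u' = u by lra.
lra.
Qed.

Lemma threshold_antidiag A u : threshold A u (1 - u) = indicator (A u).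
Proof.
rewrite /threshold; case: total_order_T => [[?|//]|?]; lra.
Qed.

Definition threshold_agg (A : R -> Prop) : op (ar_fin 2) :=
  fun x => exist _ (threshold A (proj1_sig (x ord0)) (proj1_sig (x ord_max)))
                   (threshold_in01 A _ _).

Lemma threshold_agg_aggregation A : is_aggregation (threshold_agg A).
Proof.
split; [|split].
- move=> x y le_xy; exact: threshold_mono.
- move=> x x_val /=; rewrite !x_val /threshold; case: total_order_T => [[//|]|]; lra.
- move=> x x_val /=; rewrite !x_val /threshold; case: total_order_T => [[|]|//]; lra.
Qed.

Lemma threshold_agg_determines A B x : 0 <= x <= 1 ->
  threshold_agg A = threshold_agg B -> A x -> B x.
Proof.
move=> [x_ge0 x_le1] eqAB Ax.
have y_in01 : 0 <= 1 - x <= 1 by lra.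
pose pt (i : 'I_2) : I01 :=
  if i == ord0 then exist _ x (conj x_ge0 x_le1) else exist _ (1 - x) y_in01.
have := congr1 (fun f => proj1_sig (f pt)) eqAB.
by rewrite /= !threshold_antidiag indicator_1 // => /esym/indicator_eq1.
Qed.

Theorem corollary2 (F : func -> Prop) :
  (forall h, F h -> valid_ar (projT1 h)) ->
  card_le_continuum F ->
  exists (n : nat) (f : op (ar_fin n)),
    (0 < n)%N /\ is_aggregation f /\ ~ in_sigma_clone_gen F (mkfunc f).
Proof.
move=> F_valid [e e_inj]; apply: NNPP => all_generated.
have thresholds_generated A : term_clone F (mkfunc (threshold_agg A)).
  apply: (in_sigma_clone_gen_term F_valid); apply: NNPP => not_generated.
  apply: all_generated; exists 2%N, (threshold_agg A).
  by split=> //; split; [exact: threshold_agg_aggregation|].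
apply: (@not_all_denoted _ _ _ (fun t => cantor_point (term_bits e t))
          (fun A => mkfunc (threshold_agg A)) (@denotes F)) => //.
- by move=> t t' /cantor_point_inj/(term_bits_inj e_inj).
- exact: denotes_functional.
- move=> A B t /mkfunc_inj; apply: threshold_agg_determines.
  exact: cantor_point_in01.
Qed.
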